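(* Let $G$ be a graph with vertex set $[n]$ and fix a threshold $r\ge2$. Let $\mathcal{D}_0$ be any probability distribution over subsets of $[n]$ (a randomized rule for choosing seed sets). For $A\sim\mathcal{D}_0$ and each vertex $i$, let $p_i=\Pr[i\in A]$ and $q_i=\Pr[i\in\langle A\rangle]$, and assume $q_i>0$ for every $i$. Then there is a probability distribution $\mathcal{D}$ over contagious sets of $G$ such that for every vertex $i$, $\Pr_{S\sim\mathcal{D}}[i\in S]\le p_i/q_i$. In particular, if each vertex is a seed independently with probability $p$ and each vertex is activated with probability at least $1/C$ ($C>1$), then $m(G,r)\le Cpn$.
   Context: Bootstrap percolation with threshold $r\ge 2$ on a graph $G=(V,E)$: given a set $A_0\subseteq V$ of seeds, define for $i\ge1$ $A_i=A_{i-1}\cup\{v:|N(v)\cap A_{i-1}|\ge r\}$, where $N(v)$ is the set of neighbors of $v$, and $\langle A_0\rangle=\bigcup_i A_i$ (the set of activated vertices). The set $A_0$ is contagious if $\langle A_0\rangle=V$; $m(G,r)$ denotes the minimum cardinality of a contagious set. *)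

From HB Require Import structures.
From mathcomp Require Import all_boot all_order all_algebra.
Set Implicit Arguments. Unset Strict Implicit. Unset Printing Implicit Defensive.
Import Order.TTheory GRing.Theory Num.Theory.

Section Bootstrap.
Variables (n : nat) (e : rel 'I_n) (r : nat).

Definition nbhd (v : 'I_n) : {set 'I_n} := [set u | e v u].

Definition bp_step (A : {set 'I_n}) : {set 'I_n} :=
  A :|: [set v | r <= #|nbhd v :&: A|].

Definition bp_iter (k : nat) (A : {set 'I_n}) : {set 'I_n} := iter k bp_step A.

(* <A> = \bigcup_i A_i ; the sequence A_i is increasing in the finite set 'I_n,
   so it is stationary from i = n on: the union over i <= n is the full union. *)
Definition bp_closure (A : {set 'I_n}) : {set 'I_n} :=
  \bigcup_(k < n.+1) bp_iter k A.

Definition contagious (A : {set 'I_n}) : bool := bp_closure A == [set: 'I_n].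

(* m(G,r): minimum cardinality of a contagious set ([set: 'I_n] is contagious) *)
Definition m_min : nat :=
  #|[arg min_(A < [set: 'I_n] | contagious A) #|A|]|.

End Bootstrap.

Local Open Scope ring_scope.

Definition is_distr (R : realFieldType) (n : nat) (D : {set 'I_n} -> R) : Prop :=
  (forall A, 0 <= D A) /\ \sum_(A : {set 'I_n}) D A = 1.

Definition prob (R : realFieldType) (n : nat) (D : {set 'I_n} -> R)
  (P : pred {set 'I_n}) : R := \sum_(A : {set 'I_n} | P A) D A.

Definition binom_distr (R : realFieldType) (n : nat) (p : R) (A : {set 'I_n}) : R :=
  p ^+ #|A| * (1 - p) ^+ (n - #|A|).

From HB Require Import structures.
From mathcomp Require Import all_boot all_order all_algebra.
From mathcomp Require Import ring.
Import Order.TTheory GRing.Theory Num.Theory.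

Set Implicit Arguments. Unset Strict Implicit. Unset Printing Implicit Defensive.

(* Part 1 builds the distribution D over contagious sets by "resampling
   until everything is active".  Let U be the set of vertices already
   active.  Draw A ~ D0 conditioned on the event that <A> escapes U (that
   is, <A> is not contained in U), add the new seeds A \ U to the output
   and recurse with U := U ∪ <A>; stop when U is the whole vertex set.
   Since U strictly grows, at most n rounds are needed; the output S
   satisfies <U ∪ S> = [n] and avoids the initial U.  For a vertex i not
   yet active, Pr[i ∈ S] <= Pr[i ∈ A | esc] + Pr[i ∉ <A> | esc] * p_i/q_i
   by induction, and this equals exactly p_i/q_i. *)

(* The bootstrap closure is a closure operator: extensive, monotone,
   idempotent.  Idempotence needs that the iteration is stationary after
   n rounds. *)
Section Closure.
Variables (n : nat) (e : rel 'I_n) (r : nat).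
Local Notation cl := (bp_closure e r).
Local Notation step := (bp_step e r).
Local Notation iter_bp k A := (bp_iter e r k A).
Implicit Types A B : {set 'I_n}.

Lemma bp_step_ext A : A \subset step A.
Proof. exact: subsetUl. Qed.

Lemma bp_step_mono A B : A \subset B -> step A \subset step B.
Proof.
move=> AB; apply: setUSS => //; apply/subsetP => v; rewrite !inE.
by move/leq_trans; apply; apply/subset_leq_card/setIS.
Qed.

Lemma bp_iter_mono k A B : A \subset B -> iter_bp k A \subset iter_bp k B.
Proof. by move=> AB; elim: k => //= k IH; apply: bp_step_mono. Qed.

Lemma bp_iter_incr k m A : (k <= m)%N -> iter_bp k A \subset iter_bp m A.
Proof.
move/subnK <-; elim: (m - k)%N => [|d IH] //=.
exact: subset_trans IH (bp_step_ext _).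
Qed.

Lemma bp_iter_grows_or_stops A k :
  (k <= #|iter_bp k A|)%N \/ iter_bp k A = iter_bp k.+1 A.
Proof.
elim: k => [|k [IH|IH]]; first by left.
- case: (eqVneq (iter_bp k.+1 A) (iter_bp k.+2 A)) => [->|ne]; first by right.
  left; case: (eqVneq (iter_bp k A) (iter_bp k.+1 A)) => [E|ne2].
    have stuck : iter_bp k.+2 A = iter_bp k.+1 A.
      by change (step (iter_bp k.+1 A) = step (iter_bp k A)); rewrite -E.
    by rewrite stuck eqxx in ne.
  apply: leq_ltn_trans IH _; apply: proper_card.
  by rewrite properEneq ne2 bp_step_ext.
- by right; change (step (iter_bp k A) = step (iter_bp k.+1 A)); rewrite -IH.
Qed.

Lemma bp_iter_fixed A : step (iter_bp n A) = iter_bp n A.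
Proof.
case: (bp_iter_grows_or_stops A n) => [full|]; last exact: esym.
have -> : iter_bp n A = setT.
  by apply/eqP; rewrite eqEcard subsetT cardsT card_ord.
by apply/eqP; rewrite eqEsubset subsetT bp_step_ext.
Qed.

Lemma bp_closure_iter A : cl A = iter_bp n A.
Proof.
apply/eqP; rewrite eqEsubset (bigcup_sup (@ord_max n)) // andbT.
by apply/bigcupsP => k _; apply: bp_iter_incr; rewrite -ltnS.
Qed.

Lemma closure_ext A : A \subset cl A.
Proof. by rewrite bp_closure_iter (bp_iter_incr A (leq0n n)). Qed.

Lemma closure_mono A B : A \subset B -> cl A \subset cl B.
Proof. by rewrite !bp_closure_iter; apply: bp_iter_mono. Qed.

Lemma closure_idem A : cl (cl A) = cl A.
Proof.
have iter_fixpoint k X : step X = X -> iter_bp k X = X.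
  by elim: k => //= k IH fixX; rewrite IH.
by rewrite [cl (cl A)]bp_closure_iter bp_closure_iter iter_fixpoint // bp_iter_fixed.
Qed.

Lemma closure_setT : cl setT = setT.
Proof. by apply/eqP; rewrite eqEsubset subsetT closure_ext. Qed.

(* Replacing part of a seed set by its closure does not change the closure;
   this is what makes the seeds of all rounds jointly contagious. *)
Lemma closure_setU_closure A B : cl (cl A :|: B) \subset cl (A :|: B).
Proof.
rewrite -(closure_idem (A :|: B)); apply: closure_mono.
rewrite subUset (closure_mono (subsetUl A B)) /=.
exact: subset_trans (subsetUr A B) (closure_ext _).
Qed.
End Closure.

Local Open Scope ring_scope.

Section Distributions.
Variables (R : realFieldType) (n : nat).
Implicit Types (D : {set 'I_n} -> R) (P Q : pred {set 'I_n}).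

Lemma prob_predT D : prob D xpredT = \sum_S D S.
Proof. by []. Qed.

Lemma prob_mono D P Q :
  (forall S, 0 <= D S) -> (forall S, P S -> Q S) -> prob D P <= prob D Q.
Proof.
move=> D_ge0 PQ; rewrite /prob [X in X <= _]big_mkcond [X in _ <= X]big_mkcond.
apply: ler_sum => S _; case: ifP => [/PQ -> //|_]; by case: ifP.
Qed.

Lemma mean_card D : \sum_S D S * #|S|%:R = \sum_i prob D (fun S => i \in S).
Proof.
under eq_bigr do rewrite -sum1_card natr_sum mulr_sumr big_mkcond /=.
rewrite exchange_big /=; apply: eq_bigr => i _.
by rewrite /prob [RHS]big_mkcond; apply: eq_bigr => S _; case: ifP; rewrite ?mulr1.
Qed.

Lemma exists_le_mean D (f : {set 'I_n} -> R) :
  is_distr D -> exists S, D S != 0 /\ f S <= \sum_T D T * f T.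
Proof.
move=> [D_ge0 D_sum]; set m := \sum_T D T * f T.
case: (pickP (fun S => (D S != 0) && (f S <= m))) => [S /andP[] | none].
  by exists S.
have above S : D S != 0 -> m < f S.
  by move=> DS; have := none S; rewrite /= DS /= => /negbT; rewrite -ltNge.
have dev_ge0 S : 0 <= D S * (f S - m).
  case: (eqVneq (D S) 0) => [->|DS]; first by rewrite mul0r.
  by rewrite mulr_ge0 // subr_ge0 ltW // above.
have dev_sum : \sum_S D S * (f S - m) = 0.
  under eq_bigr do rewrite mulrBr.
  by rewrite sumrB -mulr_suml D_sum mul1r subrr.
have [S DS] : exists S, D S != 0.
  case: (pickP (fun S => D S != 0)) => [S DS | D0]; first by exists S.
  move/eqP: D_sum; rewrite big1 ?(eq_sym 0) ?oner_eq0 // => S _.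
  exact/eqP/negbFE/D0.
move/eqP: dev_sum; rewrite psumr_eq0 // => /allP/(_ S (mem_index_enum S)).
by rewrite mulf_eq0 (negbTE DS) subr_eq0 => /eqP fS; have := above S DS; rewrite fS ltxx.
Qed.
End Distributions.

Section Pushforward.
Variables (R : realFieldType) (n : nat) (X : finType) (W : X -> R)
  (f : X -> {set 'I_n}).

Definition push (S : {set 'I_n}) : R := \sum_x (if f x == S then W x else 0).

Lemma prob_push (P : pred {set 'I_n}) :
  prob push P = \sum_x (if P (f x) then W x else 0).
Proof.
rewrite /prob /push exchange_big /=; apply: eq_bigr => x _.
rewrite -big_mkcondr /=; case: ifP => Pf.
  rewrite (big_pred1 (f x)) // => S /=.
  by case: (eqVneq S (f x)) => [->|ne]; rewrite ?Pf ?andbF.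
rewrite big_pred0 // => S /=.
by case: (eqVneq S (f x)) => [->|ne]; rewrite ?Pf ?andbF.
Qed.

Lemma push_ge0 : (forall x, 0 <= W x) -> forall S, 0 <= push S.
Proof. by move=> W_ge0 S; apply: sumr_ge0 => x _; case: ifP. Qed.

Lemma push_support S : push S != 0 -> exists x, f x = S /\ W x != 0.
Proof.
case: (pickP (fun x => (f x == S) && (W x != 0))) => [x /andP[/eqP ? ?]|none].
  by move=> _; exists x.
rewrite /push big1 ?eqxx // => x _; case: ifP => // fS.
by have := none x; rewrite /= fS => /negbFE/eqP.
Qed.
End Pushforward.

Section Construction.
Variables (R : realFieldType) (n : nat) (e : rel 'I_n) (r : nat)
  (D0 : {set 'I_n} -> R).
Local Notation cl := (bp_closure e r).
Implicit Types (A U S : {set 'I_n}) (D : {set 'I_n} -> R).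

Definition escape U : R := prob D0 (fun A => ~~ (cl A \subset U)).

Definition cond U A : R := if ~~ (cl A \subset U) then D0 A / escape U else 0.

Definition empty_distr S : R := (S == set0)%:R.

(* One round from the active set U: draw A ~ cond U, output the new seeds
   A \ U together with a set S' drawn from the distribution Dn U' for the
   next active set U' = U ∪ <A>. *)
Definition round U (Dn : {set 'I_n} -> {set 'I_n} -> R) : {set 'I_n} -> R :=
  push (fun x : {set 'I_n} * {set 'I_n} => cond U x.1 * Dn (U :|: cl x.1) x.2)
       (fun x => (x.1 :\: U) :|: x.2).

(* At most k rounds of the process started from U (k fuel suffices as soon
   as at most k vertices are inactive). *)
Fixpoint build k U : {set 'I_n} -> R :=
  if k is k'.+1 then (if U == setT then empty_distr else round U (build k'))
  else empty_distr.

Definition ratio i : R := prob D0 (fun A => i \in A) / prob D0 (fun A => i \in cl A).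

(* The invariant of the construction, relative to the active set U: D is a
   distribution on sets S disjoint from U with U ∪ S contagious, whose
   marginals satisfy the bound of the theorem outside U. *)
Definition completes U D : Prop :=
  [/\ is_distr D,
      forall S, D S != 0 -> cl (U :|: S) = setT /\ [disjoint S & U]
    & forall i, i \notin U -> prob D (fun S => i \in S) <= ratio i].

Lemma completes_setT : completes setT empty_distr.
Proof.
split.
- split=> [S|]; first by rewrite ler0n.
  by rewrite (bigD1 set0) //= /empty_distr eqxx big1 ?addr0 // => S /negbTE ->.
- move=> S; rewrite /empty_distr pnatr_eq0 eqb0 negbK => /eqP ->.
  by rewrite setU0 closure_setT disjoints_subset sub0set.
- by move=> i; rewrite inE.
Qed.

Lemma prob_round U Dn (P : pred {set 'I_n}) :
  prob (round U Dn) P =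
  \sum_A cond U A * prob (Dn (U :|: cl A)) (fun S' => P ((A :\: U) :|: S')).
Proof.
rewrite prob_push -(pair_bigA _ (fun A S' =>
  if P ((A :\: U) :|: S') then cond U A * Dn (U :|: cl A) S' else 0)) /=.
by apply: eq_bigr => A _; rewrite /prob mulr_sumr [RHS]big_mkcond.
Qed.

Hypothesis D0_distr : is_distr D0.
Hypothesis q_gt0 : forall i, 0 < prob D0 (fun A => i \in cl A).

Lemma D0_ge0 A : 0 <= D0 A.
Proof. by case: D0_distr. Qed.

Lemma escape_gt0 U : U != setT -> 0 < escape U.
Proof.
move=> UT; have [i iU] : exists i, i \notin U.
  apply/existsP; apply: contraNT UT; rewrite negb_exists => /forallP allU.
  by apply/eqP/setP => i; rewrite inE; apply/negbNE/allU.
apply: lt_le_trans (q_gt0 i) _; apply: prob_mono D0_ge0 _ => A iA.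
by apply: contraNN iU => /subsetP; apply.
Qed.

Lemma ratio_ge0 i : 0 <= ratio i.
Proof. by apply: divr_ge0 (ltW (q_gt0 i)); apply: sumr_ge0 => A _; apply: D0_ge0. Qed.

Lemma sum_cond U (P : pred {set 'I_n}) :
  \sum_A cond U A * (P A)%:R = (\sum_(A | ~~ (cl A \subset U) && P A) D0 A) / escape U.
Proof.
rewrite [in RHS]big_mkcond /= mulr_suml; apply: eq_bigr => A _; rewrite /cond.
by case: (~~ _); case: (P A); rewrite ?mulr1 ?mulr0 ?mul0r.
Qed.

(* A vertex outside U that becomes active makes <A> escape U, so for such
   events conditioning on escape only rescales by 1 / escape U. *)
Lemma sum_cond_active U i (P : pred {set 'I_n}) :
  i \notin U -> (forall A, P A -> i \in cl A) ->
  \sum_A cond U A * (P A)%:R = prob D0 P / escape U.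
Proof.
move=> iU P_act; rewrite sum_cond; congr (_ / _); apply: eq_bigl => A.
case PA: (P A); rewrite ?andbF ?andbT //.
by apply: contraNN iU => /subsetP; apply; apply: P_act.
Qed.

Section Round.
Variables (U : {set 'I_n}) (Dn : {set 'I_n} -> {set 'I_n} -> R).
Hypothesis U_neqT : U != setT.
Hypothesis Dn_completes :
  forall A, ~~ (cl A \subset U) -> completes (U :|: cl A) (Dn (U :|: cl A)).

Let escape_gt0U : 0 < escape U := escape_gt0 U_neqT.

Lemma cond_ge0 A : 0 <= cond U A.
Proof. by rewrite /cond; case: ifP => // _; rewrite divr_ge0 ?D0_ge0 ?ltW. Qed.

Lemma cond_sum : \sum_A cond U A = 1.
Proof. by rewrite /cond -big_mkcond -mulr_suml divff // lt0r_neq0. Qed.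

Lemma round_distr : is_distr (round U Dn).
Proof.
split.
  apply: push_ge0 => -[A S'] /=; rewrite /cond; case: ifP => escA; last by rewrite mul0r.
  have [[Dn_ge0 _] _ _] := Dn_completes escA.
  by rewrite mulr_ge0 // divr_ge0 // ?D0_ge0 // ltW.
rewrite -prob_predT prob_round -[RHS]cond_sum; apply: eq_bigr => A _.
rewrite /cond; case: ifP => escA; last by rewrite !mul0r.
by have [[_ Dn_sum] _ _] := Dn_completes escA; rewrite /prob Dn_sum mulr1.
Qed.

Lemma round_support S :
  round U Dn S != 0 -> cl (U :|: S) = setT /\ [disjoint S & U].
Proof.
case/push_support => -[A S'] [/= <-] W_neq0.
have escA : ~~ (cl A \subset U).
  by apply: contraNN W_neq0; rewrite /cond => ->; rewrite mul0r.
have Dn_neq0 : Dn (U :|: cl A) S' != 0.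
  by apply: contraNneq W_neq0 => ->; rewrite mulr0.
have [_ /(_ _ Dn_neq0) [full disj] _] := Dn_completes escA; split.
  have seeds : U :|: (A :\: U :|: S') = A :|: (U :|: S').
    by apply/setP => x; rewrite !inE; case: (x \in U); case: (x \in A).
  apply/eqP; rewrite eqEsubset subsetT -full /= seeds setUAC setUC.
  exact: closure_setU_closure.
rewrite disjoints_subset subUset setDE subsetIr /= -disjoints_subset.
exact: disjointWr (subsetUl U (cl A)) disj.
Qed.

Lemma round_given_first i A : i \notin U -> ~~ (cl A \subset U) ->
  prob (Dn (U :|: cl A)) (fun S' => i \in (A :\: U) :|: S') <=
  (i \in A)%:R + (i \notin cl A)%:R * ratio i.
Proof.
move=> iU escA; have [[Dn_ge0 Dn_sum] Dn_supp Dn_bound] := Dn_completes escA.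
have [iA | iA] := boolP (i \in A).
  apply: le_trans (_ : _ <= 1) _.
    by rewrite -Dn_sum -prob_predT; apply: prob_mono.
  by rewrite lerDl mulr_ge0 ?ratio_ge0.
have -> : prob (Dn (U :|: cl A)) (fun S' => i \in (A :\: U) :|: S') =
          prob (Dn (U :|: cl A)) (fun S' => i \in S').
  by apply: eq_bigl => S'; rewrite !inE (negbTE iA) andbF.
have [iclA | iclA] := boolP (i \in cl A); rewrite /= ?add0r ?mul1r.
  rewrite mul0r /prob big1 // => S' iS'; apply/eqP; apply: contraTT iS'.
  by case/Dn_supp => _ /disjointFl -> //; rewrite inE iclA orbT.
by apply: Dn_bound; rewrite inE negb_or iU iclA.
Qed.

(* Averaging over A, the bound is p_i/e + (1 - q_i/e) * p_i/q_i with
   e = escape U, which is exactly p_i/q_i. *)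
Lemma round_marginal i : i \notin U -> prob (round U Dn) (fun S => i \in S) <= ratio i.
Proof.
move=> iU; rewrite prob_round.
apply: le_trans (_ : _ <= \sum_A cond U A *
  ((i \in A)%:R + (i \notin cl A)%:R * ratio i)) _.
  apply: ler_sum => A _; have [escA | stay] := boolP (~~ (cl A \subset U)).
    by rewrite ler_wpM2l ?cond_ge0 ?round_given_first.
  by rewrite /cond (negbTE stay) !mul0r.
have expand A : cond U A * ((i \in A)%:R + (i \notin cl A)%:R * ratio i) =
    cond U A * (i \in A)%:R + ratio i * (cond U A - cond U A * (i \in cl A)%:R).
  by case: (i \in cl A) => /=; ring.
under eq_bigr do rewrite expand.
rewrite big_split /= -mulr_sumr sumrB cond_sum.
rewrite (sum_cond_active iU (P := fun A => i \in A)); last by move=> A; apply/subsetP/closure_ext.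
rewrite (sum_cond_active iU (P := fun A => i \in cl A)) // /ratio.
have esc_neq0 := lt0r_neq0 escape_gt0U; have q_neq0 := lt0r_neq0 (q_gt0 i).
by rewrite le_eqVlt; apply/orP; left; apply/eqP; field; rewrite esc_neq0 q_neq0.
Qed.

Lemma round_completes : completes U (round U Dn).
Proof. by split; [exact: round_distr | exact: round_support | exact: round_marginal]. Qed.
End Round.
End Construction.

(* With fuel at least the number of inactive vertices, the construction
   satisfies the invariant: each round activates a new vertex. *)
Lemma build_completes (R : realFieldType) n (e : rel 'I_n) r (D0 : {set 'I_n} -> R) :
  is_distr D0 -> (forall i, 0 < prob D0 (fun A => i \in bp_closure e r A)) ->
  forall k U, (#|~: U| <= k)%N -> completes e r D0 U (build e r D0 k U).
Proof.
move=> D0_distr q_gt0; elim=> [|k IH] U inactive /=.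
  move: inactive; rewrite leqn0 cards_eq0 -setCT (inj_eq (@setC_inj _)) => /eqP ->.
  exact: completes_setT.
case: eqP => [-> | /eqP U_neqT]; first exact: completes_setT.
apply: round_completes => // A escA; apply: IH.
rewrite -ltnS; apply: leq_trans inactive; apply: proper_card.
by rewrite properC; apply: properUl.
Qed.

Lemma contagious_distr (R : realFieldType) n (e : rel 'I_n) r (D0 : {set 'I_n} -> R) :
  is_distr D0 -> (forall i, 0 < prob D0 (fun A => i \in bp_closure e r A)) ->
  exists D : {set 'I_n} -> R,
    [/\ is_distr D, (forall S, D S != 0 -> contagious e r S) &
        forall i, prob D (fun S => i \in S) <=
          prob D0 (fun A => i \in A) / prob D0 (fun A => i \in bp_closure e r A)].
Proof.
move=> D0_distr q_gt0.
have all_inactive : (#|~: set0 : {set 'I_n}| <= n)%N by rewrite setC0 cardsT card_ord.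
have [D_distr D_supp D_bound] := build_completes D0_distr q_gt0 all_inactive.
exists (build e r D0 n set0); split=> // [S /D_supp[full _] | i].
  by rewrite /contagious -full set0U.
by apply: D_bound; rewrite inE.
Qed.

Lemma binom_prod (R : realFieldType) n (p : R) (A : {set 'I_n}) :
  binom_distr p A = \prod_i (if i \in A then p else 1 - p).
Proof.
rewrite /binom_distr (bigID (fun i => i \in A)) /=.
rewrite (eq_bigr (fun=> p)) => [|i -> //].
rewrite [X in _ = _ * X](eq_bigr (fun=> 1 - p)) => [|i /negbTE -> //].
rewrite prodr_const (eq_bigl (fun i => i \in ~: A)) => [|i]; last by rewrite inE.
by rewrite prodr_const [#|~: A|]cardsCs setCK card_ord.
Qed.

Lemma binom_is_distr (R : realFieldType) n (p : R) :
  0 <= p <= 1 -> is_distr (@binom_distr R n p).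
Proof.
case/andP=> p_ge0 p_le1; split=> [A|].
  by rewrite mulr_ge0 // exprn_ge0 // subr_ge0.
under eq_bigr do rewrite binom_prod.
rewrite -(bigA_distr (1 : R) +%R (fun=> p) (fun=> 1 - p)).
by rewrite big1 // => i _; rewrite /= addrC subrK.
Qed.

(* Under the product measure each vertex is a seed with probability p:
   forcing i0 into A amounts to giving i0 the factor (p, 0) instead of
   (p, 1 - p), and the sum of products is the product of factor sums. *)
Lemma binom_marginal (R : realFieldType) n (p : R) (i0 : 'I_n) :
  prob (@binom_distr R n p) (fun A => i0 \in A) = p.
Proof.
pose forced i : R := if i == i0 then 0 else 1 - p.
rewrite /prob big_mkcond /= (eq_bigr (fun A : {set 'I_n} => \prod_i
    (if i \in A then (fun=> p) i else forced i))) => [|A _]; last first.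
  have [i0A | i0A] := boolP (i0 \in A); last first.
    by rewrite (bigD1 i0) //= (negbTE i0A) /forced eqxx mul0r.
  rewrite binom_prod; apply: eq_bigr => i _; case: ifP => // iA.
  by rewrite /forced; case: eqP => // iE; rewrite iE i0A in iA.
rewrite -(bigA_distr (1 : R) +%R) (bigD1 i0) //= /forced eqxx addr0.
by rewrite big1 ?mulr1 // => i /negbTE ->; rewrite addrC subrK.
Qed.

Lemma m_min_le n (e : rel 'I_n) r (S : {set 'I_n}) :
  contagious e r S -> (m_min e r <= #|S|)%N.
Proof.
move=> contS; rewrite /m_min; case: arg_minnP => [|A _ minA]; last exact: minA.
by rewrite /contagious closure_setT.
Qed.

(* Some contagious set
   in the support of the distribution of part 1 has size at most the mean
   size, which is the sum of the marginals, each at most p / (1/C). *)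
Lemma m_min_product_bound (R : realFieldType) n (e : rel 'I_n) r (p C : R) :
  0 <= p <= 1 -> 1 < C ->
  (forall i : 'I_n, C^-1 <= prob (@binom_distr R n p) (fun A => i \in bp_closure e r A)) ->
  (m_min e r)%:R <= C * p * n%:R.
Proof.
move=> p01 C_gt1 q_ge; have p_ge0 : 0 <= p by case/andP: p01.
have Cinv_gt0 : 0 < C^-1 by rewrite invr_gt0 (lt_trans ltr01).
have q_gt0 i : 0 < prob (@binom_distr R n p) (fun A => i \in bp_closure e r A).
  exact: lt_le_trans Cinv_gt0 (q_ge i).
have [D [D_distr D_contagious D_bound]] := contagious_distr (binom_is_distr n p01) q_gt0.
have [S [DS S_small]] := exists_le_mean (fun S => #|S|%:R) D_distr; move: S_small => /= S_small.
apply: (@le_trans _ _ (#|S|%:R : R)); first by rewrite ler_nat m_min_le ?D_contagious.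
apply: le_trans S_small _; rewrite mean_card.
apply: le_trans (_ : _ <= \sum_(i : 'I_n) p * C) _; last first.
  by rewrite sumr_const card_ord mulr_natr mulrC.
apply: ler_sum => i _; apply: le_trans (D_bound i) _.
rewrite binom_marginal ler_wpM2l // -[C]invrK lef_pV2 ?q_ge //.
by rewrite posrE q_gt0.
Qed.

Theorem lemma2 (R : realFieldType) (n : nat) (e : rel 'I_n) (r : nat) :
  symmetric e -> irreflexive e -> (2 <= r)%N ->
  (forall D0 : {set 'I_n} -> R,
     is_distr D0 ->
     (forall i : 'I_n, 0 < prob D0 (fun A => i \in bp_closure e r A)) ->
     exists D : {set 'I_n} -> R,
       [/\ is_distr D,
           (forall S, D S != 0 -> contagious e r S) &
           (forall i : 'I_n,
              prob D (fun S => i \in S) <=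
              prob D0 (fun A => i \in A) / prob D0 (fun A => i \in bp_closure e r A))])
  /\
  (forall p C : R, 0 <= p <= 1 -> 1 < C ->
     (forall i : 'I_n,
        C^-1 <= prob (@binom_distr R n p) (fun A => i \in bp_closure e r A)) ->
     (m_min e r)%:R <= C * p * n%:R).
Proof.
move=> _ _ _; split=> [D0 | p C]; first exact: contagious_distr.
exact: m_min_product_bound.
Qed.
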